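(* Let $\{\Pi_{\bm{x}}\}_{\bm{x}\in\{0,1\}^n}$ be a POVM on $(\mathbb{C}^2)^{\otimes n}$ with measurement channel $\mathcal{M}(\rho)=\sum_{\bm{x}}\operatorname{tr}[\Pi_{\bm{x}}\rho]|\bm{x}\rangle\langle\bm{x}|$, let $\mathcal{M}^{\mathrm{Pauli}}(\rho)=\frac{1}{4^n}\sum_{P\in\{I,X,Y,Z\}^{\otimes n}}P\mathcal{M}(P\rho P)P$, and let $\{\Pi^{\mathrm{Pauli}}_{\bm{x}}\}_{\bm{x}}$ be the POVM with $\mathcal{M}^{\mathrm{Pauli}}(\rho)=\sum_{\bm{x}}\operatorname{tr}[\Pi^{\mathrm{Pauli}}_{\bm{x}}\rho]|\bm{x}\rangle\langle\bm{x}|$ for all $\rho$. Then for all $\bm{x},\bm{y}\in\{0,1\}^n$, $$\operatorname{diag}(\Pi^{\mathrm{Pauli}}_{\bm{y}})=\mathsf{T}_{\bm{y}}\mathsf{T}_{\bm{x}}^{-1}\operatorname{diag}(\Pi^{\mathrm{Pauli}}_{\bm{x}}).$$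
   Context: $\operatorname{diag}(A)\in\mathbb{C}^{2^n}$ is the vector $(\langle\bm{w}|A|\bm{w}\rangle)_{\bm{w}\in\{0,1\}^n}$ in the computational basis. For $\bm{x}\in\{0,1\}^n$, $\mathsf{T}_{\bm{x}}$ is the $2^n\times2^n$ matrix with rows and columns indexed by $\bm{i},\bm{j}\in\{0,1\}^n$ and entries $(\mathsf{T}_{\bm{x}})_{\bm{i}\bm{j}}=(-1)^{\sum_k (x_k\oplus i_k)\,j_k}$ ($\oplus$ is addition mod 2); it is a row-permuted Sylvester–Hadamard matrix, hence invertible. *)

From HB Require Import structures.
From mathcomp Require Import all_boot all_order all_algebra.
Set Implicit Arguments. Unset Strict Implicit. Unset Printing Implicit Defensive.
Import Order.TTheory GRing.Theory Num.Theory.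
Local Open Scope ring_scope.

(* Conventions: complex scalars are an arbitrary numClosedFieldType C
   (e.g. the complex numbers).  The computational basis of (C^2)^{⊗n} is
   indexed by 'I_(2^n); the bit string w ∈ {0,1}^n of an index i is given by
   w_k = bit i k = k-th binary digit of i. *)

Section Defs.
Variable C : numClosedFieldType.
Variable n : nat.

Definition bit (i : 'I_(2 ^ n)) (k : 'I_n) : bool := odd (i %/ 2 ^ k).

Definition bitI (i : 'I_(2 ^ n)) (k : 'I_n) : 'I_2 := (bit i k : nat)%:R.

Definition ctmx m p (A : 'M[C]_(m, p)) : 'M[C]_(p, m) := (map_mx Num.conj A)^T.

Definition hermitian (A : 'M[C]_(2 ^ n)) : Prop := ctmx A = A.

Definition psd (A : 'M[C]_(2 ^ n)) : Prop :=
  hermitian A /\ forall v : 'cV[C]_(2 ^ n), 0 <= (ctmx v *m A *m v) 0 0.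

Definition density (rho : 'M[C]_(2 ^ n)) : Prop := psd rho /\ \tr rho = 1.

Definition POVM (Pi : 'I_(2 ^ n) -> 'M[C]_(2 ^ n)) : Prop :=
  (forall x, psd (Pi x)) /\ \sum_x Pi x = 1%:M.

(* single-qubit Paulis: 0 = I, 1 = X, 2 = Y, 3 = Z *)
Definition imag : C := 'i.
Definition pauli1 (a : 'I_4) : 'M[C]_2 :=
  \matrix_(i < 2, j < 2)
    match val a with
    | 0 => if val i == val j then 1 else 0
    | 1 => if val i == val j then 0 else 1
    | 2 => if val i == val j then 0 else (if val i == 0 then - imag else imag)
    | _ => if val i == val j then (if val i == 0 then 1 else -1) else 0
    end.

(* n-qubit Pauli string P = P_0 ⊗ ... ⊗ P_{n-1} *)
Definition pauli (s : {ffun 'I_n -> 'I_4}) : 'M[C]_(2 ^ n) :=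
  \matrix_(i, j) \prod_(k < n) pauli1 (s k) (bitI i k) (bitI j k).

Definition ketbra (x : 'I_(2 ^ n)) : 'M[C]_(2 ^ n) := delta_mx x x.

Definition meas (Pi : 'I_(2 ^ n) -> 'M[C]_(2 ^ n)) (rho : 'M[C]_(2 ^ n)) :
  'M[C]_(2 ^ n) := \sum_x \tr (Pi x *m rho) *: ketbra x.

Definition meas_pauli (Pi : 'I_(2 ^ n) -> 'M[C]_(2 ^ n)) (rho : 'M[C]_(2 ^ n)) :
  'M[C]_(2 ^ n) :=
  (4 ^ n)%:R^-1 *: \sum_(s : {ffun 'I_n -> 'I_4})
     (pauli s *m meas Pi (pauli s *m rho *m pauli s) *m pauli s).

Definition diagv (A : 'M[C]_(2 ^ n)) : 'cV[C]_(2 ^ n) := \col_w A w w.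

Definition Tmx (x : 'I_(2 ^ n)) : 'M[C]_(2 ^ n) :=
  \matrix_(i, j) (-1) ^+ (\sum_(k < n) ((bit x k (+) bit i k) && bit j k : nat))%N.

End Defs.

From HB Require Import structures.
From mathcomp Require Import all_boot all_order all_algebra.
From mathcomp Require Import perm zify.
Import Order.TTheory GRing.Theory Num.Theory.
Set Implicit Arguments. Unset Strict Implicit. Unset Printing Implicit Defensive.
Local Open Scope ring_scope.

(* A Pauli string P has exactly one nonzero entry in each row, in column x + a
   where a is its X-part (the positions carrying X or Y) and + is bitwise
   addition mod 2; hence (P A P)_xx = A_(x+a, x+a).  Feeding |w><w| into the
   twirled channel therefore gives
     Pi^Pauli_x(w, w) = 4^-n sum_P Pi_(x+a(P))(w+a(P), w+a(P)),
   which depends only on x + w: multiplying P by X on the support of t shifts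
   a(P) by t and permutes the Pauli strings.  So diag Pi^Pauli_y is
   diag Pi^Pauli_x with entries permuted by w |-> w + x + y.  The rows of T_y are
   those of T_x permuted in the same way, and T_x is invertible because
   T_x T_x^T = 2^n. *)

Definition nbit (i k : nat) : bool := odd (i %/ 2 ^ k).

Fixpoint nat_of_bits (m : nat) (f : nat -> bool) : nat :=
  if m is m'.+1 then (f 0 + 2 * nat_of_bits m' (f \o succn))%N else 0%N.

Lemma nat_of_bits_lt m f : (nat_of_bits m f < 2 ^ m)%N.
Proof.
elim: m f => [|m IHm] f //=; rewrite expnS.
have := IHm (f \o succn); case: (f 0); lia.
Qed.

Lemma nbitS i k : nbit i k.+1 = nbit i./2 k.
Proof. by rewrite /nbit expnS divnMA divn2. Qed.

Lemma nbit_nat_of_bits m f k : (k < m)%N -> nbit (nat_of_bits m f) k = f k.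
Proof.
elim: m f k => [|m IHm] f [|k] //= ltkm.
  by rewrite /nbit expn0 divn1 oddD oddM /= addbF; case: (f 0).
rewrite nbitS (_ : _./2 = nat_of_bits m (f \o succn)) ?IHm //.
by rewrite -divn2 mulnC divnDMl // divn_small ?add0n //; case: (f 0).
Qed.

Lemma eq_from_nbit m i j : (i < 2 ^ m)%N -> (j < 2 ^ m)%N ->
  (forall k, (k < m)%N -> nbit i k = nbit j k) -> i = j.
Proof.
elim: m i j => [|m IHm] i j; first by rewrite !ltnS !leqn0 => /eqP-> /eqP->.
rewrite expnS => lti ltj eq_bits.
have eq_odd : odd i = odd j by have := eq_bits 0%N isT; rewrite /nbit !divn1.
rewrite (divn_eq i 2) (divn_eq j 2) !modn2 eq_odd !divn2; congr (_ * _ + _)%N.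
apply: IHm => [||k ltkm]; rewrite -?nbitS ?eq_bits //.
all: by rewrite -divn2 ltn_divLR ?(mulnC _ 2).
Qed.

Section BitStrings.
Variable n : nat.
Implicit Types (i j t w x : 'I_(2 ^ n)) (f : 'I_n -> bool).

Lemma eq_from_bit i j : (forall k, bit i k = bit j k) -> i = j.
Proof.
move=> eq_bits; apply/val_inj/(@eq_from_nbit n) => [||k ltkn]; rewrite ?ltn_ord //.
exact: (eq_bits (Ordinal ltkn)).
Qed.

Lemma exists_neq_bit i j : i != j -> exists k, bit i k != bit j k.
Proof.
move=> neq_ij; apply/existsP; apply: contraR neq_ij.
rewrite negb_exists => /forallP eq_bits.
by apply/eqP/eq_from_bit => k; apply/eqP; rewrite -[_ == _]negbK eq_bits.
Qed.

Definition ord_of_bits f : 'I_(2 ^ n) :=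
  Ordinal (nat_of_bits_lt n (fun k => if insub k is Some k' then f k' else false)).

Lemma bit_ord_of_bits f k : bit (ord_of_bits f) k = f k.
Proof.
by rewrite [LHS]nbit_nat_of_bits // insubT // => ltkn; congr f; apply: val_inj.
Qed.

Definition bxor i j : 'I_(2 ^ n) := ord_of_bits (fun k => bit i k (+) bit j k).

Lemma bit_bxor i j k : bit (bxor i j) k = bit i k (+) bit j k.
Proof. exact: bit_ord_of_bits. Qed.

Lemma bxorC i j : bxor i j = bxor j i.
Proof. by apply: eq_from_bit => k; rewrite !bit_bxor addbC. Qed.

Lemma bxorK j : involutive (bxor^~ j).
Proof. by move=> i; apply: eq_from_bit => k; rewrite !bit_bxor addbK. Qed.

Lemma eq_bxor i j t : (j == bxor i t) = (i == bxor j t).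
Proof. by apply/eqP/eqP => ->; rewrite bxorK. Qed.

Definition bxor_perm t : {perm 'I_(2 ^ n)} := perm (can_inj (bxorK t)).

Lemma bxor_permE t i : bxor_perm t i = bxor i t.
Proof. exact: permE. Qed.

End BitStrings.

Section Walsh.
Variables (R : numDomainType) (n : nat).
Implicit Types (c d i j l x : 'I_(2 ^ n)).

Definition walsh c j : R := (-1) ^+ (\sum_(k < n) (bit c k && bit j k))%N.

Lemma walshC c j : walsh c j = walsh j c.
Proof. by rewrite /walsh; under eq_bigr do rewrite andbC. Qed.

Lemma walsh_bxorl c d j : walsh (bxor c d) j = walsh c j * walsh d j.
Proof.
rewrite /walsh !expr_sum -big_split /=; apply: eq_bigr => k _.
by rewrite bit_bxor andb_addl signr_addb.
Qed.

Lemma walsh_sqr c j : walsh c j * walsh c j = 1.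
Proof. by rewrite -expr2 sqrr_sign. Qed.

Lemma sum_walsh_eq0 c k : bit c k -> \sum_j walsh c j = 0.
Proof.
move=> ck; set e := ord_of_bits (pred1 k).
have walsh_e : walsh c e = -1.
  rewrite /walsh (bigD1 k) //= big1 => [|l /negbTE neq_lk].
    by rewrite bit_ord_of_bits /= eqxx ck addn0.
  by rewrite bit_ord_of_bits /= neq_lk andbF.
(* Translating j by the k-th unit vector e flips the sign of every term. *)
have : \sum_j walsh c j = - \sum_j walsh c j.
  rewrite [LHS](reindex_inj (can_inj (bxorK e))) -sumrN.
  by apply: eq_bigr => j _; rewrite walshC walsh_bxorl ![walsh _ c]walshC walsh_e mulrN1.
by move/eqP; rewrite -addr_eq0 -mulr2n mulrn_eq0 => /eqP.
Qed.

End Walsh.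

Section WalshHadamard.
Variables (C : numClosedFieldType) (n : nat).
Implicit Types (i j x y : 'I_(2 ^ n)).

Lemma TmxE x i j : Tmx C x i j = walsh C (bxor x i) j.
Proof.
by rewrite mxE /walsh; congr (_ ^+ _); apply: eq_bigr => k _; rewrite bit_bxor.
Qed.

Lemma Tmx_bxor x y : Tmx C y = row_perm (bxor_perm (bxor x y)) (Tmx C x).
Proof.
apply/matrixP => i j; rewrite [RHS]mxE bxor_permE !TmxE; congr walsh.
by apply: eq_from_bit => k; rewrite !bit_bxor addbCA addKb addbC.
Qed.

Lemma Tmx_mul_tr x : Tmx C x *m (Tmx C x)^T = (2 ^ n)%:R%:M.
Proof.
apply/matrixP => i l; rewrite [LHS]mxE [RHS]mxE.
under eq_bigr do rewrite TmxE mxE TmxE -walsh_bxorl.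
have [<-|neq_il] := eqVneq i l.
  under eq_bigr do rewrite walsh_bxorl walsh_sqr.
  by rewrite sumr_const card_ord mulr1n.
have [k neq_bit] := exists_neq_bit neq_il.
rewrite mulr0n (@sum_walsh_eq0 _ _ _ k) //.
by rewrite !bit_bxor addbACA addbb; case: (bit i k) (bit l k) neq_bit => [] [].
Qed.

Lemma Tmx_unit x : Tmx C x \in unitmx.
Proof.
have inv_Tmx : Tmx C x *m ((2 ^ n)%:R^-1 *: (Tmx C x)^T) = 1%:M.
  by rewrite -scalemxAr Tmx_mul_tr scale_scalar_mx mulVf ?pnatr_eq0 ?expn_eq0.
exact: (mulmx1_unit inv_Tmx).1.
Qed.

End WalshHadamard.

Lemma mulmx_delta_mxE (R : pzSemiRingType) m p q
    (A : 'M[R]_(m, p)) (B : 'M[R]_(p, q)) z i j :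
  (A *m delta_mx z z *m B) i j = A i z * B z j.
Proof.
rewrite -(mul_delta_mx (0 : 'I_1) z z) mulmxA -mulmxA -colE -rowE mxE big_ord1.
by rewrite !mxE.
Qed.

Lemma mxtrace_mul_delta (R : comPzRingType) m (A : 'M[R]_m) w :
  \tr (A *m delta_mx w w) = A w w.
Proof.
rewrite -[A *m _]mulmx1 /mxtrace (bigD1 w) //= big1 => [|i neq_iw].
  by rewrite mulmx_delta_mxE mxE eqxx mulr1 addr0.
by rewrite mulmx_delta_mxE mxE eq_sym (negbTE neq_iw) mulr0.
Qed.

Lemma ketbra_density (C : numClosedFieldType) n (w : 'I_(2 ^ n)) :
  density (ketbra C w).
Proof.
split; last by rewrite -[ketbra C w]mul1mx mxtrace_mul_delta mxE eqxx.
split.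
  apply/matrixP => i j; rewrite !mxE andbC.
  by case: (_ && _); rewrite ?conjC0 ?conjC1.
by move=> v; rewrite mulmx_delta_mxE !mxE -normCKC exprn_ge0.
Qed.

Definition flipb (a : 'I_4) : bool := (val a == 1%N) || (val a == 2%N).

Section Pauli.
Variables (C : numClosedFieldType) (n : nat).
Implicit Types (s : {ffun 'I_n -> 'I_4}) (i j w x : 'I_(2 ^ n)).

Lemma pauli1_eq0 a (b c : bool) :
  c != b (+) flipb a -> pauli1 C a (b : nat)%:R (c : nat)%:R = 0.
Proof. by case: a => [[|[|[|[|a]]]] lta] //; case: b; case: c; rewrite mxE. Qed.

Lemma pauli1_flip_mul a (b : bool) :
  pauli1 C a (b : nat)%:R (b (+) flipb a : nat)%:R *
  pauli1 C a (b (+) flipb a : nat)%:R (b : nat)%:R = 1.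
Proof.
case: a => [[|[|[|[|a]]]] lta] //; case: b; rewrite !mxE /= ?mulr1 //.
all: by rewrite /imag ?mulrN ?mulNr ?mulr1 -?expr2 ?sqrCi opprK.
Qed.

Definition flips s : 'I_(2 ^ n) := ord_of_bits (fun k => flipb (s k)).

Lemma pauli_eq0 s i j : j != bxor i (flips s) -> pauli C s i j = 0.
Proof.
move=> /exists_neq_bit[k]; rewrite bit_bxor bit_ord_of_bits => neq_bit.
by rewrite mxE (bigD1 k) //= pauli1_eq0 ?mul0r.
Qed.

Lemma pauli_flip_mul s i :
  pauli C s i (bxor i (flips s)) * pauli C s (bxor i (flips s)) i = 1.
Proof.
rewrite !mxE -big_split big1 //= => k _.
by rewrite /bitI bit_bxor bit_ord_of_bits pauli1_flip_mul.
Qed.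

Lemma mul_pauli_mxE s (A : 'M[C]_(2 ^ n)) x j :
  (pauli C s *m A) x j = pauli C s x (bxor x (flips s)) * A (bxor x (flips s)) j.
Proof.
rewrite mxE (bigD1 (bxor x (flips s))) //= big1 ?addr0 // => l neq_l.
by rewrite pauli_eq0 ?mul0r.
Qed.

Lemma mul_mx_pauliE s (A : 'M[C]_(2 ^ n)) i x :
  (A *m pauli C s) i x = A i (bxor x (flips s)) * pauli C s (bxor x (flips s)) x.
Proof.
rewrite mxE (bigD1 (bxor x (flips s))) //= big1 ?addr0 // => l neq_l.
by rewrite pauli_eq0 ?mulr0 // -eq_bxor.
Qed.

Lemma pauli_conj_diag s (A : 'M[C]_(2 ^ n)) x :
  (pauli C s *m A *m pauli C s) x x = A (bxor x (flips s)) (bxor x (flips s)).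
Proof. by rewrite mul_mx_pauliE mul_pauli_mxE mulrAC pauli_flip_mul mul1r. Qed.

End Pauli.

(* Right multiplication by X permutes the Pauli labels I <-> X, Y <-> Z up to a
   phase, toggling whether the Pauli is off-diagonal. *)
Definition xswap (a : 'I_4) : 'I_4 :=
  match val a with 0 => inord 1 | 1 => inord 0 | 2 => inord 3 | _ => inord 2 end.

Lemma xswapK : involutive xswap.
Proof.
by case=> [[|[|[|[|a]]]] lta] //; apply: val_inj; rewrite /xswap /= inordK //= inordK.
Qed.

Lemma flipb_xswap a : flipb (xswap a) = ~~ flipb a.
Proof. by case: a => [[|[|[|[|a]]]] lta] //; rewrite /flipb /xswap /= inordK. Qed.

Section Twirl.
Variables (C : numClosedFieldType) (n : nat).
Implicit Types (Pi : 'I_(2 ^ n) -> 'M[C]_(2 ^ n)) (s : {ffun 'I_n -> 'I_4}).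
Implicit Types (t w x : 'I_(2 ^ n)).

Definition xswap_on t s : {ffun 'I_n -> 'I_4} :=
  [ffun k => if bit t k then xswap (s k) else s k].

Lemma xswap_onK t : involutive (xswap_on t).
Proof.
by move=> s; apply/ffunP => k; rewrite !ffunE; case: (bit t k); rewrite ?xswapK.
Qed.

Lemma flips_xswap_on t s : flips (xswap_on t s) = bxor (flips s) t.
Proof.
apply: eq_from_bit => k; rewrite bit_bxor !bit_ord_of_bits ffunE.
by case: (bit t k); rewrite ?flipb_xswap ?addbT ?addbF.
Qed.

Lemma meas_diag Pi rho x : meas Pi rho x x = \tr (Pi x *m rho).
Proof.
rewrite summxE (bigD1 x) //= big1 => [|z neq_zx]; first by rewrite !mxE eqxx mulr1 addr0.
by rewrite !mxE eq_sym (negbTE neq_zx) mulr0.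
Qed.

Lemma meas_pauli_ketbra_diag Pi w x :
  meas_pauli Pi (ketbra C w) x x =
  (4 ^ n)%:R^-1 * \sum_s Pi (bxor x (flips s)) (bxor w (flips s)) (bxor w (flips s)).
Proof.
rewrite mxE summxE; congr (_ * _); apply: eq_bigr => s _.
rewrite pauli_conj_diag meas_diag mulmxA mxtrace_mulC !mulmxA.
by rewrite mxtrace_mul_delta pauli_conj_diag.
Qed.

Lemma meas_pauli_ketbra_bxor Pi t w x :
  meas_pauli Pi (ketbra C (bxor w t)) (bxor x t) (bxor x t) =
  meas_pauli Pi (ketbra C w) x x.
Proof.
rewrite !meas_pauli_ketbra_diag (reindex_inj (can_inj (xswap_onK t))).
have bxor_cancel u s : bxor (bxor u t) (flips (xswap_on t s)) = bxor u (flips s).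
  by apply: eq_from_bit => k; rewrite flips_xswap_on !bit_bxor addbACA addbb addbF.
by congr (_ * _); apply: eq_bigr => s _; rewrite !bxor_cancel.
Qed.

End Twirl.

Theorem proposition5 (C : numClosedFieldType) (n : nat)
  (Pi PiP : 'I_(2 ^ n) -> 'M[C]_(2 ^ n)) :
  POVM Pi -> POVM PiP ->
  (forall rho : 'M[C]_(2 ^ n), density rho -> meas_pauli Pi rho = meas PiP rho) ->
  forall x y : 'I_(2 ^ n),
    diagv (PiP y) = Tmx C y *m invmx (Tmx C x) *m diagv (PiP x).
Proof.
move=> _ _ twirl x y.
have diag_PiP z w : PiP z w w = meas_pauli Pi (ketbra C w) z z.
  by rewrite twirl ?meas_diag ?mxtrace_mul_delta //; apply: ketbra_density.
rewrite (Tmx_bxor _ x y) row_permE mulmxK ?Tmx_unit // -row_permE.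
apply/matrixP => w j; rewrite !mxE bxor_permE !diag_PiP.
by rewrite -(meas_pauli_ketbra_bxor _ (bxor x y)) [bxor y _]bxorC bxorK.
Qed.
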